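(* Let $T$ be a set of basic terms, $\kappa$ a time variable, and $\Delta$ the saturation of the sample set $\{t[\kappa]\mid t\in T\}$. Then for any assignment (homomorphism) $h$ from the term algebra to $\mathbf{W}$ and any $n\in\omega^+$, there exists a $\Delta$-diagram $\delta$ such that $\delta(\kappa)=n$ and $\delta(t[\kappa])=[\![t]\!]_h(n)$ for all $t\in T$.
   Context: Time warps: join-preserving maps $f\colon\omega^+\to\omega^+$, $\omega^+=\omega\cup\{\omega\}$, ordered pointwise. $\mathbf{W}=\langle W,\wedge,\vee,\circ,{}^\star,\mathrm{id}\rangle$: pointwise meet/join, composition, identity, and $f^\star$ = largest time warp $h$ with $f\circ h\le p$, where $p(m)=\bigvee\{k\in\omega\mid k<m\}$. Terms are built from variables with $\wedge,\vee,\cdot,{}',1$; basic terms use only variables, $\cdot,{}',1$; $[\![t]\!]_h$ is the value of $t$ in $\mathbf{W}$ under $h$. Samples (formal expressions): $\alpha::=\kappa\mid t[\alpha]\mid \mathrm{suc}(\alpha)\mid\mathrm{last}(t)$ with $\kappa$ a time variable and $t$ a basic term. The relation $\leadsto$ on samples: $t[\alpha]\leadsto\alpha$, $\mathrm{suc}(\alpha)\leadsto\alpha$, $t[\alpha]\leadsto t[\mathrm{last}(t)]$, $(tu)[\alpha]\leadsto t[u[\alpha]]$, $t'[\alpha]\leadsto t[t'[\alpha]]$, $t'[\alpha]\leadsto t[\mathrm{suc}(t'[\alpha])]$. The saturation of a sample set is its closure under $\leadsto$; a set is saturated if closed under $\leadsto$. $S(n)=n+1$ for $n\in\omega$, $S(\omega)=\omega$.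 For saturated $\Delta$, a $\Delta$-diagram is $\delta\colon\Delta\to\omega^+$ such that, whenever the samples mentioned belong to $\Delta$: (1) $\delta(\alpha)\le\delta(\beta)\Rightarrow\delta(t[\alpha])\le\delta(t[\beta])$; (2) $\delta(\alpha)=0\Rightarrow\delta(t[\alpha])=0$; (3) $\delta(\mathrm{suc}(\alpha))=S(\delta(\alpha))$; (4) for $t[\alpha]\in\Delta$: $\delta(\mathrm{last}(t))\le\delta(\alpha)\iff\delta(t[\mathrm{last}(t)])=\delta(t[\alpha])$; (5) $\delta(\mathrm{last}(t))=\omega\Rightarrow\delta(t[\mathrm{last}(t)])=\omega$; (6) $\delta(1[\alpha])=\delta(\alpha)$; (7) $\delta(\mathrm{last}(1))=\omega$; (8) $\delta((tu)[\alpha])=\delta(t[u[\alpha]])$; (9) $\delta(\mathrm{last}(tu))=\omega\Rightarrow\delta(\mathrm{last}(t))=\delta(\mathrm{last}(u))=\omega$; (10) for $t'[\alpha]\in\Delta$: $0<\delta(\alpha)<\omega\Rightarrow\delta(t[t'[\alpha]])<\delta(\alpha)$; (11) for $t'[\alpha]\in\Delta$: $\delta(t'[\alpha])<\omega\Rightarrow\delta(\alpha)\le\delta(t[\mathrm{suc}(t'[\alpha])])$; (12) $\delta(\mathrm{last}(t'))=\omega\Rightarrow\delta(\mathrm{last}(t))=\omega$. *)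

From Stdlib Require Import Arith Relations ClassicalEpsilon.

Inductive omp : Type := fin : nat -> omp | om : omp.

Definition ole (x y : omp) : Prop :=
  match x, y with
  | _, om => True
  | om, fin _ => False
  | fin a, fin b => a <= b
  end.

Definition omin (x y : omp) : omp :=
  match x, y with
  | om, y => y
  | x, om => x
  | fin a, fin b => fin (Nat.min a b)
  end.

Definition omax (x y : omp) : omp :=
  match x, y with
  | om, _ => om
  | _, om => om
  | fin a, fin b => fin (Nat.max a b)
  end.

Definition Ssucc (x : omp) : omp :=
  match x with fin n => fin (S n) | om => om end.

Definition is_ub (A : omp -> Prop) (x : omp) : Prop := forall y, A y -> ole y x.
Definition is_lub (A : omp -> Prop) (x : omp) : Prop :=
  is_ub A x /\ forall z, is_ub A z -> ole x z.

Definition time_warp (f : omp -> omp) : Prop :=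
  forall (A : omp -> Prop) (x : omp),
    is_lub A x -> is_lub (fun y => exists z, A z /\ y = f z) (f x).

Definition fle (f g : omp -> omp) : Prop := forall x, ole (f x) (g x).

(* p(m) = sup { k in omega | k < m } *)
Definition pw (m : omp) : omp :=
  match m with fin n => fin (Nat.pred n) | om => om end.

Definition star (f : omp -> omp) : omp -> omp :=
  epsilon (inhabits (fun x : omp => x))
    (fun g => time_warp g /\ fle (fun x => f (g x)) pw /\
       forall g', time_warp g' -> fle (fun x => f (g' x)) pw -> fle g' g).

Inductive term : Type :=
| tvar : nat -> term
| tmeet : term -> term -> term
| tjoin : term -> term -> term
| tmul : term -> term -> term
| tstar : term -> term
| tone : term.

Fixpoint eval (h : nat -> omp -> omp) (t : term) : omp -> omp :=
  match t with
  | tvar v => h v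
  | tmeet a b => fun x => omin (eval h a x) (eval h b x)
  | tjoin a b => fun x => omax (eval h a x) (eval h b x)
  | tmul a b => fun x => eval h a (eval h b x)
  | tstar a => star (eval h a)
  | tone => fun x => x
  end.

Inductive bterm : Type :=
| bvar : nat -> bterm
| bmul : bterm -> bterm -> bterm
| bstar : bterm -> bterm
| bone : bterm.

Fixpoint bterm_to_term (t : bterm) : term :=
  match t with
  | bvar v => tvar v
  | bmul a b => tmul (bterm_to_term a) (bterm_to_term b)
  | bstar a => tstar (bterm_to_term a)
  | bone => tone
  end.

Inductive sample : Type :=
| skappa : nat -> sample
| sapp : bterm -> sample -> sample
| ssuc : sample -> sample
| slast : bterm -> sample.

Inductive step : sample -> sample -> Prop :=
| st_app : forall t a, step (sapp t a) a
| st_suc : forall a, step (ssuc a) a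
| st_last : forall t a, step (sapp t a) (sapp t (slast t))
| st_mul : forall t u a, step (sapp (bmul t u) a) (sapp t (sapp u a))
| st_star1 : forall t a, step (sapp (bstar t) a) (sapp t (sapp (bstar t) a))
| st_star2 : forall t a, step (sapp (bstar t) a) (sapp t (ssuc (sapp (bstar t) a))).

Definition saturation (A : sample -> Prop) (b : sample) : Prop :=
  exists a, A a /\ clos_refl_trans sample step a b.

Definition zero : omp := fin 0.

Definition diagram (D : sample -> Prop) (d : sample -> omp) : Prop :=
  (forall t a b, D a -> D b -> D (sapp t a) -> D (sapp t b) ->
     ole (d a) (d b) -> ole (d (sapp t a)) (d (sapp t b))) /\
  (forall t a, D a -> D (sapp t a) -> d a = zero -> d (sapp t a) = zero) /\
  (forall a, D a -> D (ssuc a) -> d (ssuc a) = Ssucc (d a)) /\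
  (forall t a, D (sapp t a) -> D a -> D (slast t) -> D (sapp t (slast t)) ->
     (ole (d (slast t)) (d a) <-> d (sapp t (slast t)) = d (sapp t a))) /\
  (forall t, D (slast t) -> D (sapp t (slast t)) ->
     d (slast t) = om -> d (sapp t (slast t)) = om) /\
  (forall a, D a -> D (sapp bone a) -> d (sapp bone a) = d a) /\
  (D (slast bone) -> d (slast bone) = om) /\
  (forall t u a, D (sapp (bmul t u) a) -> D (sapp t (sapp u a)) ->
     d (sapp (bmul t u) a) = d (sapp t (sapp u a))) /\
  (forall t u, D (slast (bmul t u)) -> D (slast t) -> D (slast u) ->
     d (slast (bmul t u)) = om -> d (slast t) = om /\ d (slast u) = om) /\
  (forall t a, D (sapp (bstar t) a) -> D a -> D (sapp t (sapp (bstar t) a)) ->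
     ole (fin 1) (d a) -> d a <> om ->
     ole (Ssucc (d (sapp t (sapp (bstar t) a)))) (d a)) /\
  (forall t a, D (sapp (bstar t) a) -> D a ->
     D (sapp t (ssuc (sapp (bstar t) a))) ->
     d (sapp (bstar t) a) <> om ->
     ole (d a) (d (sapp t (ssuc (sapp (bstar t) a))))) /\
  (forall t, D (slast (bstar t)) -> D (slast t) ->
     d (slast (bstar t)) = om -> d (slast t) = om).

(* The diagram is the evaluation map itself: send [kappa] to [n], [t[alpha]] to
   [[t]]_h applied to the value of [alpha], [suc] to [S], and [last(t)] to the
   least point where [[t]]_h reaches its final value [[t]]_h(omega).  All twelve
   conditions then hold for every sample, not only on the saturation.  The only
   real work is to make the time warps concrete: a map on omega^+ preserves all
   joins iff it is monotone, fixes 0 and is continuous at omega, and the residual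
   [f^star] sends [k+1] to the largest [y] with [f y <= k] (Galois connection),
   [0] to [0] and [omega] to the supremum of these. *)
From Stdlib Require Import Lia Classical ClassicalEpsilon FunctionalExtensionality Wf_nat.

Lemma ole_refl x : ole x x.
Proof. destruct x; simpl; auto. Qed.

Lemma ole_trans x y z : ole x y -> ole y z -> ole x z.
Proof. destruct x, y, z; simpl; intuition lia. Qed.

Lemma ole_antisym x y : ole x y -> ole y x -> x = y.
Proof. destruct x, y; simpl; intros; try contradiction; [f_equal; lia | reflexivity]. Qed.

Lemma ole_om x : ole x om.
Proof. destruct x; exact I. Qed.

Lemma om_ole_eq x : ole om x -> x = om.
Proof. destruct x; simpl; tauto. Qed.

Lemma zero_ole x : ole zero x.
Proof. destruct x; simpl; auto; lia. Qed.

Lemma nole_fin x m : ~ ole x (fin m) -> ole (fin (S m)) x.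
Proof. destruct x; simpl; intros; auto; lia. Qed.

Lemma fin_S_ole k x : ole (fin (S k)) x -> ole (fin k) x.
Proof. destruct x; simpl; intros; auto; lia. Qed.

Lemma Ssucc_nole x : x <> om -> ~ ole (Ssucc x) x.
Proof. destruct x; simpl; intros; [lia | congruence]. Qed.

Lemma nat_least (P : nat -> Prop) :
  (exists k, P k) -> exists k, P k /\ forall j, P j -> k <= j.
Proof.
  intros Hex.
  destruct (dec_inh_nat_subset_has_unique_least_element P (fun k => classic (P k)) Hex)
    as [k [[Pk Hk] _]].
  eauto.
Qed.

Lemma is_lub_ext (A B : omp -> Prop) x :
  (forall y, A y <-> B y) -> is_lub A x -> is_lub B x.
Proof.
  intros E [Hub Hleast]; split.
  - intros y By. apply Hub, E, By.
  - intros z Hz. apply Hleast. intros y Ay. apply Hz, E, Ay.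
Qed.

Lemma lub_ex (A : omp -> Prop) : exists x, is_lub A x.
Proof.
  destruct (classic (exists b, is_ub A (fin b))) as [Hb | Hb].
  - apply nat_least in Hb. destruct Hb as [b [Hb Hmin]].
    exists (fin b). split; auto.
    intros [c|] Hz; [apply Hmin, Hz | exact I].
  - exists om. split; [intros y _; apply ole_om |].
    intros [c|] Hz; [exfalso; eauto | exact I].
Qed.

Definition Lub (A : omp -> Prop) : omp := epsilon (inhabits zero) (is_lub A).

Lemma Lub_spec A : is_lub A (Lub A).
Proof. unfold Lub. apply epsilon_spec, lub_ex. Qed.

Lemma is_lub_approx A x m :
  is_lub A x -> ole (fin (S m)) x -> exists y, A y /\ ole (fin (S m)) y.
Proof.
  intros [_ Hleast] Hx. apply NNPP; intros Hn.
  assert (Hub : ole x (fin m)).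
  { apply Hleast. intros y Ay. apply NNPP; intros Hy.
    apply Hn. exists y. split; [exact Ay | apply nole_fin, Hy]. }
  pose proof (ole_trans _ _ _ Hx Hub). simpl in *; lia.
Qed.

Lemma om_is_lub_fin : is_lub (fun y => exists k, y = fin k) om.
Proof.
  split; [intros y _; apply ole_om |].
  intros [c|] Hz; [| exact I].
  specialize (Hz (fin (S c)) (ex_intro _ _ eq_refl)). simpl in Hz; lia.
Qed.

Record warp (f : omp -> omp) : Prop := {
  warp_mono : forall x y, ole x y -> ole (f x) (f y);
  warp_zero : f zero = zero;
  warp_om : is_lub (fun y => exists k, y = f (fin k)) (f om) }.
Arguments warp_mono {f}.
Arguments warp_zero {f}.
Arguments warp_om {f}.

Lemma time_warp_warp f : time_warp f -> warp f.
Proof.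
  intros Hf. split.
  - intros x y Hxy.
    assert (Hxy_lub : is_lub (fun z => z = x \/ z = y) y).
    { split; [intros z [-> | ->]; auto using ole_refl | intros z Hz; apply Hz; auto]. }
    apply (proj1 (Hf _ _ Hxy_lub)). exists x; auto.
  - assert (Hempty : is_lub (fun _ => False) zero).
    { split; [intros y [] | intros z _; apply zero_ole]. }
    apply ole_antisym; [| apply zero_ole].
    apply (proj2 (Hf _ _ Hempty)). intros y [z [[] _]].
  - eapply is_lub_ext; [| exact (Hf _ _ om_is_lub_fin)].
    intros y; split.
    + intros [z [[k ->] ->]]; eauto.
    + intros [k ->]. exists (fin k); eauto.
Qed.

Lemma warp_time_warp f : warp f -> time_warp f.
Proof.
  intros [Hmono Hzero Hom] A x Hx. split.
  - intros y [z [Az ->]]. apply Hmono, (proj1 Hx), Az.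
  - intros z Hz. destruct x as [[|j]|].
    + change (fin 0) with zero. rewrite Hzero. apply zero_ole.
    + destruct (is_lub_approx _ _ _ Hx (ole_refl _)) as [y [Ay Hy]].
      apply Hz. exists y. split; [exact Ay |].
      f_equal. apply ole_antisym; [exact Hy | apply (proj1 Hx), Ay].
    + apply (proj2 Hom). intros y [k ->].
      destruct (is_lub_approx _ _ k Hx (ole_om _)) as [a [Aa Ha]].
      apply ole_trans with (f a).
      * apply Hmono, fin_S_ole, Ha.
      * apply Hz. exists a; auto.
Qed.

Lemma warp_id : warp (fun x => x).
Proof. split; auto. apply om_is_lub_fin. Qed.

Lemma warp_comp f g : warp f -> warp g -> warp (fun x => f (g x)).
Proof.
  intros Hf Hg. split.
  - intros x y Hxy. apply (warp_mono Hf), (warp_mono Hg), Hxy.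
  - rewrite (warp_zero Hg). apply (warp_zero Hf).
  - eapply is_lub_ext; [| exact (warp_time_warp _ Hf _ _ (warp_om Hg))].
    intros y; split.
    + intros [z [[k ->] ->]]; eauto.
    + intros [k ->]. exists (g (fin k)); eauto.
Qed.

Definition res (f : omp -> omp) (m : nat) : omp := Lub (fun z => ole (f z) (fin m)).

Definition star_fin (f : omp -> omp) (k : nat) : omp :=
  match k with 0 => zero | S m => res f m end.

Definition star_expl (f : omp -> omp) (x : omp) : omp :=
  match x with
  | fin k => star_fin f k
  | om => Lub (fun y => exists k, y = star_fin f k)
  end.

Section Residual.

Variable f : omp -> omp.
Hypothesis Hf : warp f.

Lemma res_spec z m : ole (f z) (fin m) <-> ole z (res f m).
Proof.
  split; intros Hz.
  - apply (proj1 (Lub_spec _)), Hz.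
  - apply ole_trans with (f (res f m)); [apply (warp_mono Hf), Hz |].
    apply (proj2 (warp_time_warp _ Hf _ _ (Lub_spec _))).
    intros y [z' [Hz' ->]]. exact Hz'.
Qed.

Lemma warp_star_expl : warp (star_expl f).
Proof.
  split.
  - intros [[|k]|] [[|k']|] H; simpl in *; try lia; try contradiction;
      try apply zero_ole; try apply ole_refl.
    + apply res_spec. apply ole_trans with (fin k); [apply res_spec, ole_refl | simpl; lia].
    + apply (proj1 (Lub_spec _)). exists (S k). reflexivity.
  - reflexivity.
  - apply Lub_spec.
Qed.

Lemma star_expl_below : fle (fun x => f (star_expl f x)) pw.
Proof.
  intros [[|m]|]; simpl.
  - change (fin 0) with zero. rewrite (warp_zero Hf). apply ole_refl.
  - apply res_spec, ole_refl.
  - apply ole_om.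
Qed.

Lemma star_expl_max g : warp g -> fle (fun x => f (g x)) pw -> fle g (star_expl f).
Proof.
  intros Hg Hfg.
  assert (Hfin : forall k, ole (g (fin k)) (star_expl f (fin k))).
  { intros [|m]; simpl.
    - change (fin 0) with zero. rewrite (warp_zero Hg). apply ole_refl.
    - apply res_spec, (Hfg (fin (S m))). }
  intros [k|]; [apply Hfin |].
  apply (proj2 (warp_om Hg)). intros y [k ->].
  apply ole_trans with (star_expl f (fin k)); [apply Hfin |].
  apply (warp_mono warp_star_expl), ole_om.
Qed.

Lemma star_eq : star f = star_expl f.
Proof.
  set (P := fun g => time_warp g /\ fle (fun x => f (g x)) pw /\
       forall g', time_warp g' -> fle (fun x => f (g' x)) pw -> fle g' g).
  assert (HP : P (star_expl f)).
  { split; [apply warp_time_warp, warp_star_expl |].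
    split; [apply star_expl_below |].
    intros g' Hg'. apply star_expl_max, time_warp_warp, Hg'. }
  destruct (epsilon_spec (inhabits (fun x : omp => x)) P (ex_intro _ _ HP))
    as [Htw [Hle Hmax]].
  extensionality x. apply ole_antisym.
  - exact (proj2 (proj2 HP) _ Htw Hle x).
  - apply Hmax; apply HP.
Qed.

Lemma warp_star : warp (star f).
Proof. rewrite star_eq. apply warp_star_expl. Qed.

Lemma star_fin_S m : star f (fin (S m)) = res f m.
Proof. rewrite star_eq. reflexivity. Qed.

Lemma Ssucc_app_star_ole x :
  ole (fin 1) x -> x <> om -> ole (Ssucc (f (star f x))) x.
Proof.
  intros H1 Hx. destruct x as [[|m]|]; simpl in *; try lia; try congruence.
  rewrite star_fin_S.
  pose proof (proj2 (res_spec (res f m) m) (ole_refl _)) as Hres.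
  destruct (f (res f m)); simpl in *; lia.
Qed.

(* If [f] applied just above [star f x] stayed below some [m < x], that point would
   lie below [res f m = star f (m+1) <= star f x]. *)
Lemma ole_app_Ssucc_star x : star f x <> om -> ole x (f (Ssucc (star f x))).
Proof.
  intros Hs. apply NNPP; intros Hn.
  destruct (f (Ssucc (star f x))) as [w|] eqn:Ew; [| apply Hn, ole_om].
  apply nole_fin in Hn.
  apply (Ssucc_nole _ Hs).
  apply ole_trans with (star f (fin (S w))).
  - rewrite star_fin_S. apply res_spec. rewrite Ew. apply ole_refl.
  - apply (warp_mono warp_star), Hn.
Qed.

End Residual.

Definition last_time (f : omp -> omp) : omp :=
  epsilon (inhabits zero) (fun l => forall x, ole l x <-> f x = f om).

Section LastTime.

Variable f : omp -> omp.
Hypothesis Hf : warp f.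

Lemma last_time_spec x : ole (last_time f) x <-> f x = f om.
Proof.
  revert x. apply (epsilon_spec (inhabits zero) (fun l => forall x, ole l x <-> f x = f om)).
  destruct (classic (exists k, f (fin k) = f om)) as [Hex | Hn].
  - apply nat_least in Hex. destruct Hex as [k [Hk Hmin]].
    exists (fin k). intros x; split.
    + intros Hkx. apply ole_antisym; [apply (warp_mono Hf), ole_om |].
      rewrite <- Hk. apply (warp_mono Hf), Hkx.
    + intros Hx. destruct x as [j|]; [apply Hmin, Hx | exact I].
  - exists om. intros x; split.
    + intros Hx. apply om_ole_eq in Hx. subst; reflexivity.
    + intros Hx. destruct x as [j|]; [exfalso; eauto | exact I].
Qed.

Lemma app_last_time : f (last_time f) = f om.
Proof. apply last_time_spec, ole_refl. Qed.

Lemma last_time_om_iff : last_time f = om <-> forall k, f (fin k) <> f om.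
Proof.
  split.
  - intros Hl k Hk. apply last_time_spec in Hk. rewrite Hl in Hk. exact Hk.
  - intros Hn. destruct (last_time f) as [k|] eqn:Ek; [| reflexivity].
    exfalso. apply (Hn k). apply last_time_spec. rewrite Ek. apply ole_refl.
Qed.

Lemma last_time_om : last_time f = om -> f om = om.
Proof.
  intros Hl. pose proof (proj1 last_time_om_iff Hl) as Hne.
  assert (Hom := warp_om Hf).
  destruct (f om) as [[|v]|] eqn:Ev; [| | reflexivity]; exfalso.
  - exact (Hne 0 (warp_zero Hf)).
  - destruct (is_lub_approx _ _ v Hom (ole_refl _)) as [y [[k ->] Hk]].
    apply (Hne k), ole_antisym; [| exact Hk].
    rewrite <- Ev. apply (warp_mono Hf), ole_om.
Qed.

End LastTime.

(* If [f] settles at [k], then [star f] either reaches [om] at a finite point (when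
   [f om] is finite) or stays below [k] (when [f om = om]). *)
Lemma last_time_star f : warp f -> last_time (star f) = om -> last_time f = om.
Proof.
  intros Hf Hl.
  pose proof (proj1 (last_time_om_iff _ (warp_star f Hf)) Hl) as Hne.
  pose proof (last_time_om _ (warp_star f Hf) Hl) as Hom.
  apply (last_time_om_iff f Hf). intros k Hk.
  destruct (f om) as [w|] eqn:Ew.
  - apply (Hne (S w)). rewrite Hom, star_fin_S by exact Hf.
    apply om_ole_eq, res_spec; [exact Hf |]. rewrite Ew. apply ole_refl.
  - assert (Hbound : ole (star f om) (fin k)).
    { apply (proj2 (warp_om (warp_star f Hf))). intros y [[|m] ->].
      - change (fin 0) with zero. rewrite (warp_zero (warp_star f Hf)). apply zero_ole.
      - rewrite star_fin_S by exact Hf. apply NNPP; intros Hn.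
        apply nole_fin, fin_S_ole, (res_spec f Hf) in Hn.
        rewrite Hk in Hn. exact Hn. }
    rewrite Hom in Hbound. exact Hbound.
Qed.

Lemma last_time_id : last_time (fun x => x) = om.
Proof. apply (last_time_spec _ warp_id), ole_refl. Qed.

(* If [g] never settles, it is unbounded, so it eventually passes the point where
   [f] settles; then [f o g] would settle there too. *)
Lemma last_time_comp f g : warp f -> warp g ->
  last_time (fun x => f (g x)) = om -> last_time f = om /\ last_time g = om.
Proof.
  intros Hf Hg Hl.
  pose proof (proj1 (last_time_om_iff _ (warp_comp f g Hf Hg)) Hl) as Hne.
  assert (Hlg : last_time g = om).
  { apply (last_time_om_iff g Hg). intros k Hk. apply (Hne k). rewrite Hk. reflexivity. }
  split; [| exact Hlg].
  apply (last_time_om_iff f Hf). intros j Hj.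
  pose proof (last_time_om g Hg Hlg) as Hgom.
  assert (Hgj : ole (fin (S j)) (g om)) by (rewrite Hgom; apply ole_om).
  destruct (is_lub_approx _ _ _ (warp_om Hg) Hgj) as [y [[k ->] Hk]].
  apply (Hne k), ole_antisym; [apply (warp_mono Hf), (warp_mono Hg), ole_om |].
  rewrite Hgom, <- Hj. apply (warp_mono Hf), fin_S_ole, Hk.
Qed.

Definition bsem (h : nat -> omp -> omp) (t : bterm) : omp -> omp :=
  eval h (bterm_to_term t).

Lemma warp_bsem h t : (forall v, time_warp (h v)) -> warp (bsem h t).
Proof.
  intros hW. unfold bsem. induction t; simpl.
  - apply time_warp_warp, hW.
  - apply warp_comp; assumption.
  - apply warp_star; assumption.
  - apply warp_id.
Qed.

Fixpoint sample_val (h : nat -> omp -> omp) (n : omp) (s : sample) : omp :=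
  match s with
  | skappa _ => n
  | sapp t a => bsem h t (sample_val h n a)
  | ssuc a => Ssucc (sample_val h n a)
  | slast t => last_time (bsem h t)
  end.

Lemma sample_val_diagram h n (D : sample -> Prop) :
  (forall v, time_warp (h v)) -> diagram D (sample_val h n).
Proof.
  intros hW. pose proof (fun t => warp_bsem h t hW) as Hw.
  unfold diagram; repeat split; intros; simpl sample_val in *.
  - apply (warp_mono (Hw t)); assumption.
  - match goal with H : sample_val h n _ = zero |- _ => rewrite H end.
    apply (warp_zero (Hw t)).
  - rewrite (app_last_time _ (Hw t)). symmetry. apply last_time_spec; auto.
  - apply (last_time_spec _ (Hw t)). rewrite <- (app_last_time _ (Hw t)). auto.
  - match goal with H : last_time _ = om |- _ => rewrite H end.
    apply last_time_om; auto.
  - apply last_time_id.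
  - apply (last_time_comp (bsem h t) (bsem h u)); auto.
  - apply (last_time_comp (bsem h t) (bsem h u)); auto.
  - apply (Ssucc_app_star_ole _ (Hw t)); assumption.
  - apply (ole_app_Ssucc_star _ (Hw t)); assumption.
  - apply (last_time_star _ (Hw t)); assumption.
Qed.

Theorem proposition3p3 (T : bterm -> Prop) (kappa : nat)
  (h : nat -> omp -> omp) (hW : forall v, time_warp (h v)) (n : omp) :
  exists d : sample -> omp,
    diagram (saturation (fun s => exists t, T t /\ s = sapp t (skappa kappa))) d /\
    d (skappa kappa) = n /\
    (forall t, T t -> d (sapp t (skappa kappa)) = eval h (bterm_to_term t) n).
Proof.
  exists (sample_val h n).
  split; [apply sample_val_diagram, hW |].
  split; reflexivity.
Qed.
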